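(* Let $G$ be a graph with exactly four vertices and $\operatorname{sdim}G=2$. Then $R_G\le\frac{\sqrt2}{2}$.
   Context: A unit-distance embedding of a graph $G$ in $\mathbb{R}^n$ is an injective map $f$ from the vertex set of $G$ to $\mathbb{R}^n$ such that $|f(u)-f(v)|=1$ for every edge $uv$ and no point $f(w)$ lies on the segment $[f(u),f(v)]$ for an edge $uv$ with $w\notin\{u,v\}$. $G$ admits a spherical embedding of dimension $k$ and radius $r$ if $G$ has a unit-distance embedding in $\mathbb{R}^k$ all of whose vertices lie on a sphere $\{x\in\mathbb{R}^k:|x-c|=r\}$. $\operatorname{sdim}G$ is the least $k$ such that $G$ admits a spherical embedding of dimension $k$ and some radius $r<1$. $R_G$ is the infimum of all $r<1$ such that $G$ admits a spherical embedding of dimension $\operatorname{sdim}G$ and radius $r$. *)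

From HB Require Import structures.
From mathcomp Require Import all_boot all_order all_algebra.
From mathcomp Require Import boolp classical_sets reals.
Set Implicit Arguments. Unset Strict Implicit. Unset Printing Implicit Defensive.
Import Order.TTheory GRing.Theory Num.Theory.
Local Open Scope ring_scope.
Local Open Scope classical_set_scope.

Definition enorm (R : realType) (k : nat) (x : 'rV[R]_k) : R :=
  Num.sqrt (\sum_(i < k) (x 0 i) ^+ 2).

(* A simple graph on a finite vertex type T is a symmetric irreflexive
   relation e : rel T; uv is an edge iff e u v. *)

Definition unit_dist_emb (R : realType) (T : finType) (e : rel T) (k : nat)
    (f : T -> 'rV[R]_k) : Prop :=
  injective f /\
  (forall u v, e u v -> enorm (f u - f v) = 1) /\
  (forall u v w, e u v -> w != u -> w != v ->
     ~ (exists t : R, 0 <= t <= 1 /\ f w = (1 - t) *: f u + t *: f v)).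

Definition spherical_emb (R : realType) (T : finType) (e : rel T) (k : nat)
    (r : R) : Prop :=
  0 < r /\
  exists (f : T -> 'rV[R]_k) (c : 'rV[R]_k),
    unit_dist_emb e f /\ forall w, enorm (f w - c) = r.

Definition sdim_is (R : realType) (T : finType) (e : rel T) (k : nat) : Prop :=
  (exists r : R, r < 1 /\ spherical_emb e k r) /\
  (forall j, (j < k)%N -> ~ (exists r : R, r < 1 /\ spherical_emb e j r)).

(* R_G, given that sdim G = k. *)
Definition RG (R : realType) (T : finType) (e : rel T) (k : nat) : R :=
  inf [set r : R | r < 1 /\ spherical_emb e k r].

From HB Require Import structures.
From mathcomp Require Import all_boot all_order all_algebra.
From mathcomp Require Import boolp classical_sets reals.
From mathcomp Require Import ring lra.
Import Order.TTheory GRing.Theory Num.Theory.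
Local Open Scope ring_scope.

(* Since sdim G = 2, G has a unit-distance embedding on some circle.  The
   neighbours of a vertex v lie on that circle and on the unit circle around
   v, i.e. on a line, so there are at most two of them: G has maximum
   degree 2.  A truth table then shows that, for a suitable ordering a, b, c,
   d of its vertices, G is a subgraph of the 4-cycle a-c-b-d-a (ab and cd are
   non-edges) or d is isolated.  In the first case G embeds on the circle of
   radius sqrt 2 / 2 through the corners of a unit square, in the second on
   the circle of radius 1 / sqrt 3 through a unit equilateral triangle, d
   going to the antipode of a.  Any injective map onto a circle sending edges
   to unit segments is a unit-distance embedding, because the circle is
   strictly convex; so both radii are admissible, and 1 / sqrt 3 <= sqrt 2 / 2. *)

Section CircleAlgebra.
Context {R : realFieldType}.

Lemma sqr_sum_eq0 {x y : R} : x ^+ 2 + y ^+ 2 = 0 -> x = 0 /\ y = 0.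
Proof. by move/eqP; rewrite paddr_eq0 ?sqr_ge0 // !sqrf_eq0 => /andP[/eqP-> /eqP->]. Qed.

(* A point (a1, a2) is determined by its dot and cross products with a
   nonzero vector (p, q) (Lagrange's identity). *)
Lemma dot_cross_inj {a1 a2 b1 b2 p q : R} : p ^+ 2 + q ^+ 2 != 0 ->
  a1 * p + a2 * q = b1 * p + b2 * q ->
  a2 * p - a1 * q = b2 * p - b1 * q -> a1 = b1 /\ a2 = b2.
Proof.
move=> pq_neq0 dotE crossE.
have lagrange : ((a1 - b1) ^+ 2 + (a2 - b2) ^+ 2) * (p ^+ 2 + q ^+ 2) =
    ((a1 * p + a2 * q) - (b1 * p + b2 * q)) ^+ 2
    + ((a2 * p - a1 * q) - (b2 * p - b1 * q)) ^+ 2 by ring.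
move: lagrange; rewrite dotE crossE !subrr expr0n addr0 => /eqP.
rewrite mulf_eq0 (negbTE pq_neq0) orbF => /eqP /sqr_sum_eq0[].
by move=> /eqP; rewrite subr_eq0 => /eqP-> /eqP; rewrite subr_eq0 => /eqP->.
Qed.

Lemma line_circle_at_most_two {a1 a2 b1 b2 w1 w2 p q k m : R} :
  p ^+ 2 + q ^+ 2 != 0 ->
  a1 * p + a2 * q = k -> b1 * p + b2 * q = k -> w1 * p + w2 * q = k ->
  a1 ^+ 2 + a2 ^+ 2 = m -> b1 ^+ 2 + b2 ^+ 2 = m -> w1 ^+ 2 + w2 ^+ 2 = m ->
  [\/ a1 = b1 /\ a2 = b2, a1 = w1 /\ a2 = w2 | b1 = w1 /\ b2 = w2].
Proof.
move=> pq_neq0 ka kb kw ma mb mw.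
(* On the line, the squared cross product is fixed by the circle. *)
have cross_sqr x1 x2 : x1 * p + x2 * q = k -> x1 ^+ 2 + x2 ^+ 2 = m ->
    (x2 * p - x1 * q) ^+ 2 = m * (p ^+ 2 + q ^+ 2) - k ^+ 2.
  by move=> <- <-; ring.
have sqr_eqP (x y : R) : x ^+ 2 = y ^+ 2 -> x = y \/ x = - y.
  by move/eqP; rewrite eqf_sqr => /orP[] /eqP->; [left | right].
have [ab|ab] := sqr_eqP _ _ (etrans (cross_sqr _ _ ka ma) (esym (cross_sqr _ _ kb mb))).
  by constructor 1; apply: dot_cross_inj pq_neq0 _ ab; rewrite ka kb.
have [aw|aw] := sqr_eqP _ _ (etrans (cross_sqr _ _ ka ma) (esym (cross_sqr _ _ kw mw))).
  by constructor 2; apply: dot_cross_inj pq_neq0 _ aw; rewrite ka kw.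
constructor 3; apply: dot_cross_inj pq_neq0 _ _; first by rewrite kb kw.
by apply: oppr_inj; rewrite -ab -aw.
Qed.

Lemma segment_circle_endpoint {u1 u2 v1 v2 w1 w2 t m : R} :
  w1 = (1 - t) * u1 + t * v1 -> w2 = (1 - t) * u2 + t * v2 ->
  u1 ^+ 2 + u2 ^+ 2 = m -> v1 ^+ 2 + v2 ^+ 2 = m -> w1 ^+ 2 + w2 ^+ 2 = m ->
  (w1 = u1 /\ w2 = u2) \/ (w1 = v1 /\ w2 = v2).
Proof.
move=> w1E w2E mu mv mw.
have : t * (1 - t) * ((u1 - v1) ^+ 2 + (u2 - v2) ^+ 2) = 0.
  transitivity ((1 - t) * (u1 ^+ 2 + u2 ^+ 2) + t * (v1 ^+ 2 + v2 ^+ 2)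
                - (w1 ^+ 2 + w2 ^+ 2)); first by rewrite w1E w2E; ring.
  by rewrite mu mv mw; ring.
move/eqP; rewrite !mulf_eq0 => /orP[/orP[/eqP t0|/eqP t1]|/eqP /sqr_sum_eq0[]].
- by left; rewrite w1E w2E t0; split; ring.
- by right; rewrite w1E w2E (_ : t = 1); [split; ring | lra].
- move=> /eqP; rewrite subr_eq0 => /eqP uv1 /eqP; rewrite subr_eq0 => /eqP uv2.
  by left; rewrite w1E w2E -uv1 -uv2; split; ring.
Qed.

Lemma unit_chord_dot {x1 x2 v1 v2 c1 c2 r : R} :
  (x1 - c1) ^+ 2 + (x2 - c2) ^+ 2 = r ^+ 2 ->
  (v1 - c1) ^+ 2 + (v2 - c2) ^+ 2 = r ^+ 2 ->
  (x1 - v1) ^+ 2 + (x2 - v2) ^+ 2 = 1 ->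
  (x1 - c1) * (v1 - c1) + (x2 - c2) * (v2 - c2) = (2 * r ^+ 2 - 1) / 2.
Proof.
move=> xr vr xv.
have polar : (x1 - v1) ^+ 2 + (x2 - v2) ^+ 2 =
    ((x1 - c1) ^+ 2 + (x2 - c2) ^+ 2) + ((v1 - c1) ^+ 2 + (v2 - c2) ^+ 2)
    - 2 * ((x1 - c1) * (v1 - c1) + (x2 - c2) * (v2 - c2)) by ring.
by move: polar; rewrite xr vr xv; lra.
Qed.

End CircleAlgebra.

Section PlanePoints.
Context {R : realType}.

Definition pt (a b : R) : 'rV[R]_2 := \row_(i < 2) if i == 0 then a else b.

Lemma pt0 (a b : R) : pt a b 0 0 = a. Proof. by rewrite mxE. Qed.
Lemma pt1 (a b : R) : pt a b 0 1 = b. Proof. by rewrite mxE. Qed.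

Lemma row2_eq (x y : 'rV[R]_2) : x 0 0 = y 0 0 -> x 0 1 = y 0 1 -> x = y.
Proof.
move=> eq0 eq1; apply/rowP => i.
have [->|->] : i = 0 \/ i = 1.
  by case: i => -[|[|//]] i_lt2; [left | right]; apply: val_inj.
- exact: eq0.
- exact: eq1.
Qed.

Lemma enorm2E (x : 'rV[R]_2) : enorm x = Num.sqrt (x 0 0 ^+ 2 + x 0 1 ^+ 2).
Proof.
rewrite /enorm !big_ord_recl big_ord0 addr0.
by rewrite (_ : lift ord0 ord0 = 1 :> 'I_2) //; apply: val_inj.
Qed.

Lemma enorm2_sub_sqr {x y : 'rV[R]_2} {r : R} : enorm (x - y) = r ->
  (x 0 0 - y 0 0) ^+ 2 + (x 0 1 - y 0 1) ^+ 2 = r ^+ 2.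
Proof. by rewrite enorm2E !mxE => <-; rewrite sqr_sqrtr // addr_ge0 ?sqr_ge0. Qed.

Lemma pt_eqE (a b a' b' : R) : (pt a b == pt a' b') = (a == a') && (b == b').
Proof.
apply/eqP/andP => [ab_eq | [/eqP-> /eqP->] //]; split; apply/eqP.
- by have := congr1 (fun x : 'rV[R]_2 => x 0 0) ab_eq; rewrite /= !pt0.
- by have := congr1 (fun x : 'rV[R]_2 => x 0 1) ab_eq; rewrite /= !pt1.
Qed.

Lemma pt_sub (a b a' b' : R) : pt a b - pt a' b' = pt (a - a') (b - b').
Proof. by apply: row2_eq; rewrite !mxE. Qed.

Lemma enorm_pt (a b r : R) : 0 <= r -> a ^+ 2 + b ^+ 2 = r ^+ 2 -> enorm (pt a b) = r.
Proof. by move=> r_ge0; rewrite enorm2E pt0 pt1 => ->; rewrite sqrtr_sqr ger0_norm. Qed.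

End PlanePoints.

Section EmbeddingsOnCircle.
Context {R : realType} {T : finType} (e : rel T).

(* Strict convexity of the circle: an injective map of the vertices onto a
   circle that sends edges to unit segments is a unit-distance embedding. *)
Lemma unit_dist_emb_on_circle {f : T -> 'rV[R]_2} {c : 'rV[R]_2} {r : R} :
  injective f -> (forall u v, e u v -> enorm (f u - f v) = 1) ->
  (forall w, enorm (f w - c) = r) -> unit_dist_emb e f.
Proof.
move=> f_inj f_unit f_circ; split=> //; split=> // u v w _ w_neq_u w_neq_v [t [_ fwE]].
have coord i : f w 0 i - c 0 i = (1 - t) * (f u 0 i - c 0 i) + t * (f v 0 i - c 0 i).
  by rewrite fwE !mxE; ring.
have on_circ x := enorm2_sub_sqr (f_circ x).
have [[eq0 eq1]|[eq0 eq1]] :=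
  segment_circle_endpoint (coord 0) (coord 1) (on_circ u) (on_circ v) (on_circ w).
- by move/eqP: w_neq_u; apply; apply: f_inj; apply: row2_eq; lra.
- by move/eqP: w_neq_v; apply; apply: f_inj; apply: row2_eq; lra.
Qed.

Definition max_degree_le2 : Prop :=
  forall v x y z, uniq [:: x; y; z] -> ~~ [&& e v x, e v y & e v z].

(* On a circle, the neighbours of v lie on the unit circle around v, which
   meets the circle along a line; so v has at most two neighbours. *)
Lemma circle_max_degree_le2 {f : T -> 'rV[R]_2} {c : 'rV[R]_2} {r : R} :
  symmetric e -> 0 < r -> unit_dist_emb e f ->
  (forall w, enorm (f w - c) = r) -> max_degree_le2.
Proof.
move=> e_sym r_gt0 [f_inj [f_unit _]] f_circ v x y z xyz_uniq.
apply/and3P => -[evx evy evz].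
have on_circ w := enorm2_sub_sqr (f_circ w).
have chord_dot w : e v w -> (f w 0 0 - c 0 0) * (f v 0 0 - c 0 0) +
    (f w 0 1 - c 0 1) * (f v 0 1 - c 0 1) = (2 * r ^+ 2 - 1) / 2.
  move=> evw; apply: unit_chord_dot (on_circ w) (on_circ v) _.
  by rewrite -(expr1n R 2); apply/enorm2_sub_sqr/f_unit; rewrite e_sym.
have v_neq_c : (f v 0 0 - c 0 0) ^+ 2 + (f v 0 1 - c 0 1) ^+ 2 != 0.
  by rewrite on_circ sqrf_eq0 gt_eqF.
move: xyz_uniq; rewrite /= !inE !negb_or andbT => /andP[/andP[xy xz] yz].
case: (line_circle_at_most_two v_neq_c (chord_dot x evx)
  (chord_dot y evy) (chord_dot z evz) (on_circ x) (on_circ y) (on_circ z)) => -[eq0 eq1].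
- by move/eqP: xy; apply; apply: f_inj; apply: row2_eq; lra.
- by move/eqP: xz; apply; apply: f_inj; apply: row2_eq; lra.
- by move/eqP: yz; apply; apply: f_inj; apply: row2_eq; lra.
Qed.

Lemma uniq_card_cover {s : seq T} : uniq s -> #|T| = size s -> forall w, w \in s.
Proof.
move=> /card_uniqP s_card s_size w.
have /subset_cardP sT : #|s| = #|T| by rewrite s_card s_size.
by rewrite (sT (subset_predT _)).
Qed.

Lemma spherical_of_labelling {Q : seq T} {P : seq 'rV[R]_2} {r : R} (u0 : T) :
  uniq Q -> #|T| = size Q -> uniq P -> size P = size Q -> 0 < r ->
  (forall p, p \in P -> enorm p = r) ->
  (forall i j, (i < size Q)%N -> (j < size Q)%N ->
     e (nth u0 Q i) (nth u0 Q j) -> enorm (nth 0 P i - nth 0 P j) = 1) ->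
  spherical_emb e 2 r.
Proof.
move=> Q_uniq Q_size P_uniq P_size r_gt0 P_circ P_unit.
have Q_cover := uniq_card_cover Q_uniq Q_size.
have index_lt w : (index w Q < size Q)%N by rewrite index_mem.
pose f w := nth 0 P (index w Q).
have f_inj : injective f.
  move=> x y /eqP; rewrite /f nth_uniq ?P_size // => /eqP idx.
  by rewrite -(nth_index u0 (Q_cover x)) idx nth_index.
have f_circ w : enorm (f w - 0) = r by rewrite subr0 P_circ // mem_nth ?P_size.
split=> //; exists f, 0; split=> //.
apply: (unit_dist_emb_on_circle f_inj _ f_circ) => u v euv.
by apply: P_unit; rewrite ?nth_index.
Qed.

End EmbeddingsOnCircle.

Section UnitConfigurations.
Context {R : realType}.

Let h : R := 2^-1.
Let h_double : h + h = 1. Proof. by rewrite /h; lra. Qed.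
Let sqrt2_sqr : Num.sqrt 2 ^+ 2 = 2 :> R. Proof. by rewrite sqr_sqrtr ?ler0n. Qed.
Let sqrt2_ge0 : 0 <= Num.sqrt 2 :> R. Proof. exact: sqrtr_ge0. Qed.

(* The corners of a unit square centred at the origin, listed so that the
   sides join the first two corners to the last two. *)
Definition unit_square : seq 'rV[R]_2 :=
  [:: pt h h; pt (- h) (- h); pt (- h) h; pt h (- h)].

Lemma unit_square_uniq : uniq unit_square.
Proof. by have h_dbl := h_double; rewrite /= !inE !pt_eqE andbT; lra. Qed.

Lemma unit_square_on_circle p : p \in unit_square -> enorm p = Num.sqrt 2 / 2.
Proof.
have h_dbl := h_double; have sqrt2 := sqrt2_sqr; have sqrt2_nneg := sqrt2_ge0.
by rewrite !inE => /or4P[] /eqP->; apply: enorm_pt; nra.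
Qed.

Lemma unit_square_sides i j : (i < 4)%N -> (j < 4)%N -> (i < 2)%N != (j < 2)%N ->
  enorm (unit_square`_i - unit_square`_j) = 1.
Proof.
have h_dbl := h_double.
by case: i => [|[|[|[|i]]]] // _; case: j => [|[|[|[|j]]]] // _ _;
  rewrite pt_sub; apply: enorm_pt; nra.
Qed.

Let s : R := Num.sqrt 3^-1.
Let s_sqr : s ^+ 2 = 3^-1. Proof. by rewrite /s sqr_sqrtr // invr_ge0 ler0n. Qed.
Let s_ge0 : 0 <= s. Proof. exact: sqrtr_ge0. Qed.

(* A unit equilateral triangle inscribed in the circle of radius
   s = 1 / sqrt 3 centred at the origin, followed by the antipode of its
   first vertex. *)
Definition unit_triangle_antipode : seq 'rV[R]_2 :=
  [:: pt 0 s; pt h (- (s / 2)); pt (- h) (- (s / 2)); pt 0 (- s)].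

Lemma unit_triangle_antipode_uniq : uniq unit_triangle_antipode.
Proof.
have h_dbl := h_double; have s3 := s_sqr; have s0 := s_ge0.
by rewrite /= !inE !pt_eqE andbT; nra.
Qed.

Lemma unit_triangle_antipode_on_circle p :
  p \in unit_triangle_antipode -> enorm p = Num.sqrt 3^-1.
Proof.
have h_dbl := h_double; have s3 := s_sqr; have s0 := s_ge0.
by rewrite -/s !inE => /or4P[] /eqP->; apply: enorm_pt; nra.
Qed.

Lemma unit_triangle_antipode_sides i j : (i < 3)%N -> (j < 3)%N -> i != j ->
  enorm (unit_triangle_antipode`_i - unit_triangle_antipode`_j) = 1.
Proof.
have h_dbl := h_double; have s3 := s_sqr; have s0 := s_ge0.
by case: i => [|[|[|i]]] // _; case: j => [|[|[|j]]] // _ _;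
  rewrite pt_sub; apply: enorm_pt => //; nra.
Qed.

Lemma sqrt_third_le : Num.sqrt 3^-1 <= Num.sqrt 2 / 2 :> R.
Proof.
have sqrt2 := sqrt2_sqr; have sqrt2_nneg := sqrt2_ge0.
by have s3 := s_sqr; have s0 := s_ge0; rewrite -/s; nra.
Qed.

Lemma sqrt2_half_lt1 : Num.sqrt 2 / 2 < 1 :> R.
Proof. by have sqrt2 := sqrt2_sqr; have sqrt2_nneg := sqrt2_ge0; nra. Qed.

End UnitConfigurations.

(* Truth table for a graph on {0, 1, 2, 3}, where bij says whether ij is an
   edge: if every vertex has degree at most 2, then some perfect matching
   consists of non-edges, or some vertex is isolated. *)
Lemma max_degree_le2_on_four {b01 b02 b03 b12 b13 b23 : bool} :
  ~~ [&& b01, b02 & b03] -> ~~ [&& b01, b12 & b13] ->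
  ~~ [&& b02, b12 & b23] -> ~~ [&& b03, b13 & b23] ->
  [|| ~~ b01 && ~~ b23, ~~ b02 && ~~ b13 | ~~ b03 && ~~ b12] ||
  [|| [&& ~~ b01, ~~ b02 & ~~ b03], [&& ~~ b12, ~~ b13 & ~~ b01],
      [&& ~~ b23, ~~ b02 & ~~ b12] | [&& ~~ b03, ~~ b13 & ~~ b23]].
Proof. by case: b01; case: b02; case: b03; case: b12; case: b13; case: b23. Qed.

Section FourVertices.
Context {R : realType} {T : finType} {e : rel T}.
Hypotheses (e_sym : symmetric e) (e_irr : irreflexive e).

(* The two shapes of a four-vertex graph of maximum degree 2: a subgraph of
   the 4-cycle a-c-b-d-a, or a graph in which d is isolated. *)
Definition c4_or_isolated (a b c d : T) : bool :=
  (~~ e a b && ~~ e c d) || [&& ~~ e a d, ~~ e b d & ~~ e c d].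

Lemma four_vertex_shape : #|T| = 4 -> max_degree_le2 e ->
  exists a b c d, uniq [:: a; b; c; d] /\ c4_or_isolated a b c d.
Proof.
move=> card4 deg.
have := enum_uniq T; have : size (enum T) = 4 by rewrite -cardE.
case: (enum T) => [|x0 [|x1 [|x2 [|x3 [|? ?]]]]] // _ U.
have rotU n : uniq (rot n [:: x0; x1; x2; x3]) by rewrite rot_uniq.
have d0 := deg x0 x1 x2 x3 (mask_uniq U [:: false; true; true; true]).
have d1 := deg x1 x0 x2 x3 (mask_uniq U [:: true; false; true; true]).
have d2 := deg x2 x0 x1 x3 (mask_uniq U [:: true; true; false; true]).
have d3 := deg x3 x0 x1 x2 (mask_uniq U [:: true; true; true; false]).
rewrite (e_sym x1 x0) in d1; rewrite (e_sym x2 x0) (e_sym x2 x1) in d2.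
rewrite (e_sym x3 x0) (e_sym x3 x1) (e_sym x3 x2) in d3.
rewrite /c4_or_isolated.
case/orP: (max_degree_le2_on_four d0 d1 d2 d3) => [/or3P[] pm | /or4P[] iso].
- by exists x0, x1, x2, x3; rewrite pm.
- exists x2, x0, x1, x3; rewrite (e_sym x2 x0) pm; split=> //.
  by rewrite -(perm_uniq (permEl (perm_catCA [:: x0; x1] [:: x2] [:: x3]))).
- exists x1, x2, x3, x0; rewrite (e_sym x3 x0) andbC pm.
  by split=> //; exact: rotU 1.
- exists x1, x2, x3, x0; rewrite !(e_sym _ x0) iso orbT.
  by split=> //; exact: rotU 1.
- exists x2, x3, x0, x1; rewrite (e_sym x2 x1) (e_sym x3 x1) iso orbT.
  by split=> //; exact: rotU 2.
- exists x3, x0, x1, x2; rewrite (e_sym x3 x2) iso orbT.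
  by split=> //; exact: rotU 3.
- by exists x0, x1, x2, x3; rewrite iso orbT.
Qed.

(* If ab and cd are non-edges, G embeds on the unit square: a, b go to two
   opposite corners and c, d to the other two. *)
Lemma square_embedding {a b c d : T} : #|T| = 4 -> uniq [:: a; b; c; d] ->
  ~~ e a b -> ~~ e c d -> spherical_emb e 2 (Num.sqrt 2 / 2 : R).
Proof.
move=> card4 abcd ab cd; have ba : ~~ e b a by rewrite e_sym.
have dc : ~~ e d c by rewrite e_sym.
apply: (spherical_of_labelling e a abcd card4 unit_square_uniq) => //.
- by apply: divr_gt0; rewrite ?sqrtr_gt0 ltr0n.
- exact: unit_square_on_circle.
move=> i j i_lt4 j_lt4 eij; apply: unit_square_sides => //.
move: i j i_lt4 j_lt4 eij => [|[|[|[|i]]]] [|[|[|[|j]]]] //= _ _.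
all: by rewrite ?e_irr ?(negbTE ab) ?(negbTE ba) ?(negbTE cd) ?(negbTE dc).
Qed.

(* If d is isolated, G embeds on the unit triangle a, b, c, with d at the
   antipode of a. *)
Lemma triangle_embedding {a b c d : T} : #|T| = 4 -> uniq [:: a; b; c; d] ->
  ~~ e a d -> ~~ e b d -> ~~ e c d -> spherical_emb e 2 (Num.sqrt 3^-1 : R).
Proof.
move=> card4 abcd ad bd cd; have da : ~~ e d a by rewrite e_sym.
have db : ~~ e d b by rewrite e_sym.
have dc : ~~ e d c by rewrite e_sym.
apply: (spherical_of_labelling e a abcd card4 unit_triangle_antipode_uniq) => //.
- by rewrite sqrtr_gt0 invr_gt0 ltr0n.
- exact: unit_triangle_antipode_on_circle.
move=> i j i_lt4 j_lt4 eij.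
have [i_lt3 j_lt3 i_neq_j] : [/\ (i < 3)%N, (j < 3)%N & i != j].
  by move: i j i_lt4 j_lt4 eij => [|[|[|[|i]]]] [|[|[|[|j]]]] //= _ _;
    rewrite ?e_irr ?(negbTE ad) ?(negbTE bd) ?(negbTE cd) ?(negbTE da)
      ?(negbTE db) ?(negbTE dc).
exact: unit_triangle_antipode_sides.
Qed.

End FourVertices.

Theorem mainTheorem14 (R : realType) (T : finType) (e : rel T) :
  symmetric e -> irreflexive e -> #|T| = 4%N ->
  sdim_is R e 2 ->
  RG R e 2 <= Num.sqrt 2 / 2.
Proof.
move=> e_sym e_irr card4 [[r [_ [r_gt0 [f [o [f_emb f_circ]]]]]] _].
have deg := circle_max_degree_le2 e e_sym r_gt0 f_emb f_circ.
have [a [b [c [d [abcd shape]]]]] := four_vertex_shape e_sym card4 deg.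
(* Admissible radii are positive, so R_G is at most any admissible radius;
   it suffices to exhibit one below sqrt 2 / 2. *)
suff [rho [rho_le rho_adm]] : exists rho : R,
    rho <= Num.sqrt 2 / 2 /\ (rho < 1 /\ spherical_emb e 2 rho).
  apply: le_trans rho_le; apply: ge_inf rho_adm.
  by exists 0 => x [_ [x_gt0 _]]; exact: ltW.
have sqrt2_half_lt1 := @sqrt2_half_lt1 R.
case/orP: shape => [/andP[ab cd] | /and3P[ad bd cd]].
- exists (Num.sqrt 2 / 2); split=> //; split=> //.
  exact: (square_embedding (R := R) e_sym e_irr card4 abcd ab cd).
- exists (Num.sqrt 3^-1); split; first exact: sqrt_third_le.
  split; first exact: le_lt_trans sqrt_third_le sqrt2_half_lt1.
  exact: (triangle_embedding (R := R) e_sym e_irr card4 abcd ad bd cd).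
Qed.
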